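(* Let $(X,\overline{x})=(X_1,X_2,\overline{x},\delta_1,\delta_2,\delta_3)$ be a reachable pointed lasso automaton. Then $\nu\mathrm{C}(X,\overline{x})\cong\mathsf{free}(X)$ as pointed lasso automata.
   Context: $\Sigma$ is a finite alphabet, $\Sigma^{\ast+}=\Sigma^\ast\times\Sigma^+$ the lassos. A pointed lasso automaton is $(X_1,X_2,\overline{x},\delta_1,\delta_2,\delta_3)$ with disjoint $X_1,X_2$, $\overline{x}\in X_1$, $\delta_1:X_1\times\Sigma\to X_1$, $\delta_2:X_1\times\Sigma\to X_2$, $\delta_3:X_2\times\Sigma\to X_2$; extend $\delta_1,\delta_3$ to words, $\delta_\circ(x,av)=\delta_3(\delta_2(x,a),v)$ for $x\in X_1$, $\delta(x,(u,v))=\delta_\circ(\delta_1(x,u),v)$. It is reachable if every $x\in X_1$ is $\delta_1(\overline{x},w)$ for some $w$ and every $y\in X_2$ is $\delta(\overline{x},(u,v))$ for some lasso. For a pair $(C_1,C_2)$ of equivalences on $\Sigma^\ast$, $\Sigma^{\ast+}$ (satisfying the needed compatibility), $Q(C_1,C_2)$ denotes the pointed lasso automaton $(\Sigma^\ast/C_1,\Sigma^{\ast+}/C_2,[\epsilon],\sigma_1,\sigma_2,\sigma_3)$ with $\sigma_1([w])(a)=[wa]$, $\sigma_2([w])(a)=[(w,a)]$, $\sigma_3([(u,v)])(a)=[(u,va)]$. $\nu\mathrm{C}(X,\overline{x})=Q(\ker\delta_1^\sharp,\ker\delta^\sharp)$ computed on the reachable part of $X$, where $\ker\delta_1^\sharp=\{(u,v)\mid\forall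 x:\delta_1(x,u)=\delta_1(x,v)\}$ and $\ker\delta^\sharp=\{((u,v),(u',v'))\mid\forall x:\delta(x,(u,v))=\delta(x,(u',v'))\}$, $x$ ranging over first-sort states. A set of equations is a bisimulation equivalence $E=(E_1,E_2)$ on the initial automaton $(\Sigma^\ast,\Sigma^{\ast+})$ with transitions $\sigma_1(u,a)=ua$, $\sigma_2(u,a)=(u,a)$, $\sigma_3((u,v),a)=(u,va)$ (i.e. $(u,u')\in E_1\Rightarrow(ua,u'a)\in E_1,((u,a),(u',a))\in E_2$ and $((u,v),(u',v'))\in E_2\Rightarrow((u,va),(u',v'a))\in E_2$); $X$ satisfies $E$ if for all $x\in X_1$, $\delta_1(x,\cdot)$ identifies $E_1$-related words and $\delta(x,\cdot)$ identifies $E_2$-related lassos. $\mathsf{Eq}(X)$ is the largest set of equations satisfied by $X$, and $\mathsf{free}(X)=Q(\mathsf{Eq}(X))$. *)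

From mathcomp Require Import all_boot.
From Stdlib Require Import ClassicalEpsilon.
Set Implicit Arguments. Unset Strict Implicit. Unset Printing Implicit Defensive.

(* Nonempty words Sigma^+ are encoded as pairs (a, v) standing for a :: v,
   so a lasso (u, a::v) in Sigma^* x Sigma^+ is the triple (u, (a, v)). *)

Definition word (S : finType) := seq S.
Definition lasso (S : finType) := (seq S * (S * seq S))%type.

(* Pointed lasso automaton (X1, X2, xbar, delta1, delta2, delta3);
   the two sorts are separate types, hence disjoint. *)
Record plA (S : finType) := PlA {
  st1 : Type;
  st2 : Type;
  pt : st1;
  d1 : st1 -> S -> st1;
  d2 : st1 -> S -> st2;
  d3 : st2 -> S -> st2 }.

Section Defs.
Variable S : finType.

Definition d1s (X : plA S) (x : st1 X) (w : seq S) : st1 X := foldl (@d1 S X) x w.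
Definition d3s (X : plA S) (y : st2 X) (w : seq S) : st2 X := foldl (@d3 S X) y w.
Definition dcirc (X : plA S) (x : st1 X) (av : S * seq S) : st2 X :=
  d3s (d2 x av.1) av.2.
Definition dl (X : plA S) (x : st1 X) (l : lasso S) : st2 X :=
  dcirc (d1s x l.1) l.2.

Definition reach1 (X : plA S) (x : st1 X) : Prop := exists w, x = d1s (pt X) w.

Definition reachable (X : plA S) : Prop :=
  (forall x : st1 X, exists w, x = d1s (pt X) w) /\
  (forall y : st2 X, exists l : lasso S, y = dl (pt X) l).

Definition iso (X Y : plA S) : Prop :=
  exists (f1 : st1 X -> st1 Y) (f2 : st2 X -> st2 Y),
    bijective f1 /\ bijective f2 /\ f1 (pt X) = pt Y /\
    (forall x a, f1 (d1 x a) = d1 (f1 x) a) /\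
    (forall x a, f2 (d2 x a) = d2 (f1 x) a) /\
    (forall y a, f2 (d3 y a) = d3 (f2 y) a).

(* quotient T / C as the type of equivalence classes [t] = C t *)
Definition classes (T : Type) (C : T -> T -> Prop) : Type :=
  {P : T -> Prop | exists t, P = C t}.
Definition cls (T : Type) (C : T -> T -> Prop) (t : T) : classes C :=
  exist _ (C t) (ex_intro _ t erefl).
Definition repr (T : Type) (C : T -> T -> Prop) (p : classes C) : T :=
  proj1_sig (constructive_indefinite_description _ (proj2_sig p)).

Definition Q (C1 : word S -> word S -> Prop) (C2 : lasso S -> lasso S -> Prop)
  : plA S :=
  @PlA S (classes C1) (classes C2) (cls C1 [::])
    (fun p a => cls C1 (rcons (repr p) a))
    (fun p a => cls C2 (repr p, (a, [::])))
    (fun q b => let l := repr q in cls C2 (l.1, (l.2.1, rcons l.2.2 b))).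

(* kernels, computed on the reachable part of X *)
Definition kerd1 (X : plA S) (u v : word S) : Prop :=
  forall x : st1 X, reach1 x -> d1s x u = d1s x v.
Definition kerd (X : plA S) (l l' : lasso S) : Prop :=
  forall x : st1 X, reach1 x -> dl x l = dl x l'.

Definition nuC (X : plA S) : plA S := Q (@kerd1 X) (@kerd X).

(* sets of equations: bisimulation equivalences on the initial automaton *)
Definition equivR (T : Type) (R : T -> T -> Prop) : Prop :=
  (forall t, R t t) /\ (forall t t', R t t' -> R t' t) /\
  (forall t t' t'', R t t' -> R t' t'' -> R t t'').

Definition isEquations (E1 : word S -> word S -> Prop)
  (E2 : lasso S -> lasso S -> Prop) : Prop :=
  equivR E1 /\ equivR E2 /\
  (forall u u' a, E1 u u' ->
      E1 (rcons u a) (rcons u' a) /\ E2 (u, (a, [::])) (u', (a, [::]))) /\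
  (forall u a v u' a' v' b, E2 (u, (a, v)) (u', (a', v')) ->
      E2 (u, (a, rcons v b)) (u', (a', rcons v' b))).

Definition satisfies (X : plA S) (E1 : word S -> word S -> Prop)
  (E2 : lasso S -> lasso S -> Prop) : Prop :=
  forall x : st1 X,
    (forall u u', E1 u u' -> d1s x u = d1s x u') /\
    (forall l l', E2 l l' -> dl x l = dl x l').

(* Eq(X): the largest set of equations satisfied by X, i.e. the union of all
   sets of equations satisfied by X *)
Definition Eq1 (X : plA S) (u u' : word S) : Prop :=
  exists E1 E2, isEquations E1 E2 /\ satisfies X E1 E2 /\ E1 u u'.
Definition Eq2 (X : plA S) (l l' : lasso S) : Prop :=
  exists E1 E2, isEquations E1 E2 /\ satisfies X E1 E2 /\ E2 l l'.

Definition free (X : plA S) : plA S := Q (@Eq1 X) (@Eq2 X).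

End Defs.

(* The kernel pair (ker delta1#, ker delta#) computed on the reachable states
   is always a set of equations, and every set of equations satisfied by X is
   contained in it.  When X is reachable, X itself satisfies this kernel pair,
   which is therefore the largest set of equations Eq(X); so nuC(X) and
   free(X) are the same quotient Q. *)

From mathcomp Require Import all_boot.
From Stdlib Require Import FunctionalExtensionality PropExtensionality.

Set Implicit Arguments.
Unset Strict Implicit.
Unset Printing Implicit Defensive.

Lemma iso_refl (S : finType) (X : plA S) : iso X X.
Proof.
exists id, id; do 2![split; first exact: (Bijective (g := id))].
by repeat split.
Qed.

Lemma rel_ext (T : Type) (R R' : T -> T -> Prop) :
  (forall t t', R t t' <-> R' t t') -> R = R'.
Proof.
move=> RR'; apply: functional_extensionality => t.
by apply: functional_extensionality => t'; apply: propositional_extensionality.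
Qed.

Lemma kernel_equiv (A T R : Type) (P : A -> Prop) (f : A -> T -> R) :
  equivR (fun t t' => forall x, P x -> f x t = f x t').
Proof.
split=> [t x _ //|]; split=> [t t' tt' x Px|t t' t'' tt' t't'' x Px].
  by rewrite tt'.
by rewrite tt' ?t't''.
Qed.

Section Kernel.
Variables (S : finType) (X : plA S).

Lemma d1s_rcons (x : st1 X) u a : d1s x (rcons u a) = d1 (d1s x u) a.
Proof. by rewrite /d1s -cats1 foldl_cat. Qed.

Lemma dl_rcons (x : st1 X) u a v b :
  dl x (u, (a, rcons v b)) = d3 (dl x (u, (a, v))) b.
Proof. by rewrite /dl /dcirc /d3s -cats1 foldl_cat. Qed.

Lemma kerd_isEquations : isEquations (@kerd1 S X) (@kerd S X).
Proof.
split; first exact: kernel_equiv.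
split; first exact: kernel_equiv.
split=> [u u' a uu'|u a v u' a' v' b ll' x rx].
  by split=> x rx; [rewrite !d1s_rcons uu' | rewrite /dl /dcirc /= uu'].
by rewrite !dl_rcons ll'.
Qed.

Lemma Eq1_kerd1 u u' : Eq1 X u u' -> kerd1 X u u'.
Proof. by move=> [E1 [E2 [_ [satE E]]]] x _; apply: (satE x).1. Qed.

Lemma Eq2_kerd l l' : Eq2 X l l' -> kerd X l l'.
Proof. by move=> [E1 [E2 [_ [satE E]]]] x _; apply: (satE x).2. Qed.

Hypothesis reachX : forall x : st1 X, reach1 x.

Lemma satisfies_kerd : satisfies X (@kerd1 S X) (@kerd S X).
Proof. by move=> x; split=> ? ? ker; apply: ker. Qed.

Lemma kerd1_Eq1 : @kerd1 S X = @Eq1 S X.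
Proof.
apply: rel_ext => u u'; split; last exact: Eq1_kerd1.
exists (@kerd1 S X), (@kerd S X).
by split; [exact: kerd_isEquations | split; first exact: satisfies_kerd].
Qed.

Lemma kerd_Eq2 : @kerd S X = @Eq2 S X.
Proof.
apply: rel_ext => l l'; split; last exact: Eq2_kerd.
exists (@kerd1 S X), (@kerd S X).
by split; [exact: kerd_isEquations | split; first exact: satisfies_kerd].
Qed.

End Kernel.

Theorem mainTheorem14 (S : finType) (X : plA S) :
  reachable X -> iso (nuC X) (free X).
Proof.
case=> reach1X _.
rewrite /nuC /free (kerd1_Eq1 reach1X) (kerd_Eq2 reach1X).
exact: iso_refl.
Qed.
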